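(* Assume the internal updates of the sensitive attribute are completely random: $P_{trans}(a,b)=1/|\mathrm{dom}(S)|$ for all $a,b\in\mathrm{dom}(S)$, so every sensitive value can update to every value, including itself. Let $t$ be a record whose versions $t'_1,\dots,t'_I$ appear in the releases published so far, with candidate sensitive sets $C_1,\dots,C_I$. Suppose a new release is published, in any way whatsoever, in which $t$ appears with candidate sensitive set $C_{I+1}$. For $1\le i\le I$, let $r(t'_i)$ be the disclosure risk of $t'_i$ computed from the feasible sub-SUG of $t$ with layers $1,\dots,I$, and let $r^{+}(t'_i)$ be the disclosure risk of $t'_i$ computed from the feasible sub-SUG of $t$ with layers $1,\dots,I+1$. Then $r^{+}(t'_i)=r(t'_i)$ for every $1\le i\le I$.
   Context: Data model. A microdata table is published repeatedly. Its records carry an identifier, quasi-identifier (QI) attributes and a sensitive attribute $S$ with a finite domain $\mathrm{dom}(S)$. Each published (generalized) table partitions its records, possibly including counterfeit records, into QI-groups. If a record $t$ appears in a release, its candidate sensitive set in that release is the set of sensitive values occurring in its QI-group; this set contains $t$'s actual sensitive value. The versions of $t$ are its records in the successive releases in which it appears, listed in order: $t'_1,\dots,t'_I$, with candidate sensitive sets $C_1,\dots,C_I$. Internal updates are governed by a publicly known transition probability $P_{trans}(a,b)\ge 0$ for $a,b\in\mathrm{dom}(S)$. Actual updates are feasible: $P_{trans}(t'_i[S],t'_{i+1}[S])>0$ for every $i$. Sensitive attribute update graph (SUG). The SUG of $t$ has, for each $i=1,\dots,I$, a layer $V_i=\{v_{i,s}: s\in C_i\}$ with one node per value of $C_i$.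 Each node has a weight $w(v_{i,s})>0$, its linking probability, and the weights in each layer sum to $1$; under the random-world assumption $w(v_{i,s})=1/|C_i|$. There is a directed edge $(v_{i,s},v_{i+1,s'})$ exactly when $P_{trans}(s,s')>0$, and its weight is $P_{trans}(s,s')$. Feasible sub-SUG. Obtain it from the SUG by repeatedly deleting a node, together with its incident edges, until no node can be deleted. A node is deleted if any of the following holds: it lies in $V_1$ and has no outgoing edge; it lies in $V_I$ and has no incoming edge; it lies in $V_i$ with $1<i<I$ and lacks an incoming edge or lacks an outgoing edge. When $I=1$, no node is deleted. Denote the remaining layers by $V'_i$. Disclosure risk. A feasible path is a path $p=(v'_{1,x_1},\dots,v'_{I,x_I})$ through the feasible sub-SUG with one node in each layer, where consecutive nodes are joined by edges. Its weight is $w(p)=w(v'_{I,x_I})\prod_{i=1}^{I-1} w(v'_{i,x_i})\,w(v'_{i,x_i},v'_{i+1,x_{i+1}})$. The disclosure risk of version $t'_i$ is the total weight of the feasible paths passing through the node of $V'_i$ that represents $t'_i[S]$, divided by the total weight of all feasible paths. *)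

From HB Require Import structures.
From mathcomp Require Import all_boot all_order all_algebra.
Set Implicit Arguments. Unset Strict Implicit. Unset Printing Implicit Defensive.
Import Order.TTheory GRing.Theory Num.Theory.
Local Open Scope ring_scope.

(* Layers are indexed 0 .. m-1 (paper: 1 .. I, with m = I).
   A layer configuration V : nat -> {set S} gives, for each layer i, the set
   of sensitive values s such that the node v_{i,s} is present.
   Edge (v_{i,s}, v_{i+1,s'}) exists iff 0 < P s s'. *)

Section SUG.
Variables (R : realFieldType) (S : finType).

Definition deletable (m : nat) (P : S -> S -> R) (V : nat -> {set S})
    (i : nat) (s : S) : bool :=
  let has_out := [exists b in V i.+1, 0 < P s b] in
  let has_in := [exists c in V i.-1, 0 < P c s] in
  if m == 1%N then false
  else if i == 0%N then ~~ has_out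
  else if i == m.-1 then ~~ has_in
  else ~~ has_in || ~~ has_out.

Definition prune_step (m : nat) (P : S -> S -> R) (V : nat -> {set S}) :
    nat -> {set S} :=
  fun i => [set s in V i | ~~ deletable m P V i s].

Definition sug_layers (m : nat) (C : nat -> {set S}) : nat -> {set S} :=
  fun i => if (i < m)%N then C i else set0.

(* Feasible sub-SUG: iterate deletion until nothing can be deleted; since
   each non-stationary step removes a node, m * #|S| + 1 iterations suffice
   (after stabilisation the step is the identity). *)
Definition feasible_layers (m : nat) (P : S -> S -> R) (C : nat -> {set S}) :
    nat -> {set S} :=
  iter (m * #|S|).+1 (prune_step m P) (sug_layers m C).

Definition feasible_path (n : nat) (P : S -> S -> R) (V : nat -> {set S})
    (x : {ffun 'I_n.+1 -> S}) : bool :=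
  [forall i : 'I_n.+1, x i \in V i] &&
  [forall i : 'I_n, 0 < P (x (widen_ord (leqnSn n) i)) (x (lift ord0 i))].

Definition path_weight (n : nat) (w : nat -> S -> R) (P : S -> S -> R)
    (x : {ffun 'I_n.+1 -> S}) : R :=
  w n (x ord_max) *
  \prod_(i < n) (w i (x (widen_ord (leqnSn n) i)) *
                 P (x (widen_ord (leqnSn n) i)) (x (lift ord0 i))).

Definition disclosure_risk (n : nat) (w : nat -> S -> R) (P : S -> S -> R)
    (V : nat -> {set S}) (i : 'I_n.+1) (a : S) : R :=
  (\sum_(x : {ffun 'I_n.+1 -> S} | feasible_path P V x && (x i == a)) path_weight w P x) /
  (\sum_(x : {ffun 'I_n.+1 -> S} | feasible_path P V x) path_weight w P x).

End SUG.

From HB Require Import structures.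
From mathcomp Require Import all_boot all_order all_algebra.
From mathcomp Require Import ring zify.
Import Order.TTheory GRing.Theory Num.Theory.
Local Open Scope ring_scope.

(* With every transition probability positive, every node of a nonempty layer
   has both an incoming and an outgoing edge, so the feasible sub-SUG is the
   whole SUG.  Feasible paths are then all families of candidate values, the
   path weight factorises as p^(I-1) * prod_j w_j(x_j), and the risk of t'_i
   collapses to its linking probability w_i(t'_i[S]), whatever the number of
   layers. *)

Lemma eq_prune_step {R : realFieldType} {S : finType} {m : nat}
    {P : S -> S -> R} {V V' : nat -> {set S}} :
  V =1 V' -> prune_step m P V =1 prune_step m P V'.
Proof. by move=> eV i; rewrite /prune_step /deletable !eV. Qed.

Section ConstantTransition.
Variables (R : realFieldType) (S : finType) (p : R) (w : nat -> S -> R).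
Hypothesis p_gt0 : 0 < p.
Let P := fun _ _ : S => p.

Lemma nondeletable_const (m : nat) (V : nat -> {set S}) (i : nat) (s : S) :
  (forall j, (j < m)%N -> V j != set0) -> (i < m)%N -> ~~ deletable m P V i s.
Proof.
move=> V_neq0 lt_im.
have edge j c : (j < m)%N -> [exists b in V j, 0 < P c b].
  by move=> /V_neq0 /set0Pn [b Vb]; apply/existsP; exists b; rewrite Vb p_gt0.
have edge' j c : (j < m)%N -> [exists b in V j, 0 < P b c].
  by move=> /V_neq0 /set0Pn [b Vb]; apply/existsP; exists b; rewrite Vb p_gt0.
rewrite /deletable; case: eqP => // m_neq1.
case: eqP => [i0 | i_neq0]; first by rewrite negbK edge //; lia.
case: eqP => [_ | i_neq_last]; first by rewrite negbK edge' //; lia.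
by rewrite negb_or !negbK edge ?edge' //; lia.
Qed.

Lemma feasible_layers_const (m : nat) (C : nat -> {set S}) :
  (forall j, (j < m)%N -> C j != set0) ->
  feasible_layers m P C =1 sug_layers m C.
Proof.
move=> C_neq0; rewrite /feasible_layers; elim: (m * #|S|).+1 => // k IH i /=.
rewrite (eq_prune_step IH) /prune_step; apply/setP => s; rewrite inE.
case: (boolP (s \in sug_layers m C i)) => //= s_in.
have lt_im : (i < m)%N by move: s_in; rewrite /sug_layers; case: ltnP; rewrite ?inE.
rewrite nondeletable_const // => j lt_jm; rewrite /sug_layers lt_jm; exact: C_neq0.
Qed.

Lemma feasible_path_const (n : nat) (V : nat -> {set S}) (x : {ffun 'I_n.+1 -> S}) :
  feasible_path P V x = [forall j : 'I_n.+1, x j \in V j].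
Proof.
by rewrite /feasible_path [X in _ && X](introT forallP (fun=> p_gt0)) andbT.
Qed.

Lemma path_weight_const (n : nat) (x : {ffun 'I_n.+1 -> S}) :
  path_weight w P x = p ^+ n * \prod_(j < n.+1) w j (x j).
Proof. by rewrite /path_weight big_split /= prodr_const card_ord big_ord_recr /=; ring. Qed.

Lemma sum_path_weight_family (n : nat) (Q : 'I_n.+1 -> pred S) :
  \sum_(x : {ffun 'I_n.+1 -> S} | [forall j, Q j (x j)]) path_weight w P x =
  p ^+ n * \prod_(j < n.+1) \sum_(s | Q j s) w j s.
Proof.
rewrite bigA_distr_big_dep mulr_sumr.
by apply: eq_big => [x | x _]; [apply/forallP/familyP | rewrite path_weight_const].
Qed.

Lemma disclosure_risk_const (n : nat) (V : nat -> {set S}) (i : 'I_n.+1) (a : S) :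
  (forall j : 'I_n.+1, \sum_(s in V j) w j s = 1) -> a \in V i ->
  disclosure_risk w P V i a = w i a.
Proof.
move=> sum_w1 Via; rewrite /disclosure_risk.
rewrite (eq_bigl (fun x : {ffun 'I_n.+1 -> S} =>
   [forall j, (x j \in V j) && ((j == i) ==> (x j == a))])); last first.
  move=> x; rewrite feasible_path_const; apply/andP/forallP.
    by move=> [/forallP Vx /eqP xi] j; rewrite Vx; apply/implyP => /eqP ->; rewrite xi.
  move=> Vx; split; first by apply/forallP => j; case/andP: (Vx j).
  by case/andP: (Vx i); rewrite eqxx.
rewrite [X in _ / X](eq_bigl (fun x : {ffun 'I_n.+1 -> S} => [forall j, x j \in V j]));
  last by move=> x; rewrite feasible_path_const.
rewrite (sum_path_weight_family n (fun j s => (s \in V j) && ((j == i) ==> (s == a)))).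
rewrite (sum_path_weight_family n (fun j s => s \in V j)).
rewrite (bigD1 i) // [\prod_(j < n.+1) \sum_(s in V j) w j s](bigD1 i) //=.
have sum_wi : \sum_(s in V i | (i == i) ==> (s == a)) w i s = w i a.
  by rewrite (big_pred1 a) // => s; rewrite eqxx andb_idl // => /eqP ->.
have other_layers : \prod_(j < n.+1 | j != i)
    \sum_(s in V j | (j == i) ==> (s == a)) w j s = 1.
  by apply: big1 => j /negbTE ji; rewrite -(sum_w1 j); apply: eq_bigl => s; rewrite ji andbT.
rewrite sum_wi other_layers sum_w1 (eq_bigr (fun=> 1)) => [|j _]; last exact: sum_w1.
by rewrite big1_eq !mulr1 mulrC mulKf // expf_neq0 // lt0r_neq0.
Qed.

Lemma feasible_risk_const (n : nat) (C : nat -> {set S}) (i : 'I_n.+1) (a : S) :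
  (forall j, (j <= n)%N -> \sum_(s in C j) w j s = 1) -> a \in C i ->
  disclosure_risk w P (feasible_layers n.+1 P C) i a = w i a.
Proof.
move=> sum_w1 Cia.
have C_neq0 j : (j < n.+1)%N -> C j != set0.
  move=> lt_jn; apply/eqP => C0; move: (sum_w1 j lt_jn).
  by rewrite C0 big_set0 => /eqP; rewrite eq_sym oner_eq0.
have layerE (j : 'I_n.+1) : feasible_layers n.+1 P C j = C j.
  by rewrite feasible_layers_const // /sug_layers ltn_ord.
by apply: disclosure_risk_const => [j|]; rewrite layerE // sum_w1 // -ltnS.
Qed.

End ConstantTransition.

(* I = n.+1 existing versions (layers 0..n); new release = layer n.+1. *)
Theorem lemma1 (R : realFieldType) (S : finType) (n : nat)
    (C : nat -> {set S}) (a : nat -> S) (w : nat -> S -> R) :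
  (forall i : nat, (i <= n.+1)%N -> a i \in C i) ->
  (forall i : nat, (i <= n.+1)%N -> forall s, s \in C i -> 0 < w i s) ->
  (forall i : nat, (i <= n.+1)%N -> \sum_(s in C i) w i s = 1) ->
  let P := fun _ _ : S => 1 / (#|S|%:R : R) in
  forall i : 'I_n.+1,
    disclosure_risk w P (feasible_layers n.+2 P C)
      (widen_ord (leqnSn n.+1) i) (a i)
    = disclosure_risk w P (feasible_layers n.+1 P C) i (a i).
Proof.
move=> a_in_C _ sum_w1 P i.
have p_gt0 : 0 < 1 / (#|S|%:R : R).
  by rewrite div1r invr_gt0 ltr0n; apply/card_gt0P; exists (a 0%N).
have a_in_Ci : a i \in C i by apply: a_in_C; rewrite leqW // -ltnS.
rewrite !feasible_risk_const // => j le_jn; apply: sum_w1; exact: leqW.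
Qed.
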